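(* Every tree admits a canonical dominating set.
   Context: A set $D\subseteq V(G)$ is a dominating set if every vertex of $G$ is in $D$ or adjacent to a vertex of $D$. Two dominating sets $D,D'$ are adjacent if $|D\triangle D'|=1$. For dominating sets $D_p,D_q$ and an integer $k>0$, write $D_p\leftrightarrow_k D_q$ if there is a sequence $D_0=D_p,\dots,D_\ell=D_q$ ($\ell\ge0$) of dominating sets of $G$ with consecutive sets adjacent and $|D_i|\le k$ for all $i$. A minimum dominating set $D^*$ of $G$ is canonical if $D\leftrightarrow_{|D|+1} D^*$ for every dominating set $D$ of $G$. *)

From mathcomp Require Import all_boot.
Set Implicit Arguments. Unset Strict Implicit. Unset Printing Implicit Defensive.

Section Dom.
Variables (T : finType) (e : rel T).

Definition simple_graph : Prop := symmetric e /\ irreflexive e.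

Definition connected_graph : Prop := forall x y : T, connect e x y.

Definition acyclic_graph : Prop :=
  forall c : seq T, uniq c -> 2 < size c -> ~~ cycle e c.

Definition is_tree : Prop := simple_graph /\ connected_graph /\ acyclic_graph.

Definition dominating (D : {set T}) : bool :=
  [forall v, (v \in D) || [exists u in D, e u v]].

Definition dom_adj (D D' : {set T}) : bool :=
  #|(D :\: D') :|: (D' :\: D)| == 1.

Definition reconf (k : nat) (Dp Dq : {set T}) : Prop :=
  exists s : seq {set T},
    [/\ path dom_adj Dp s, last Dp s = Dq &
        all (fun D => dominating D && (#|D| <= k)) (Dp :: s)].

Definition minimum_dominating (D : {set T}) : Prop :=
  dominating D /\ forall D' : {set T}, dominating D' -> #|D| <= #|D'|.

Definition canonical_dominating (Ds : {set T}) : Prop :=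
  minimum_dominating Ds /\
  forall D : {set T}, dominating D -> reconf #|D|.+1 D Ds.

End Dom.

From mathcomp Require Import all_boot zify.
Set Implicit Arguments. Unset Strict Implicit. Unset Printing Implicit Defensive.

(* Fix a minimum dominating set Ds.  From a dominating set C we walk to Ds
   without ever exceeding |C| + 1 vertices: while C is not a minimal dominating
   set we delete a vertex; once it is minimal and C <> Ds, we add some u of
   Ds \ C and then delete some w of C \ Ds.  Each move decreases
   |C| + |C \ Ds|.
   Such an exchange always exists in a forest.  Otherwise, with A = C \ Ds,
   B = Ds \ C and P the private neighbours of A outside C ∪ Ds, every vertex
   of A has two neighbours in P ∪ B and every vertex of P has one in B;
   orienting edges from A to P to B then yields at least 2|A| + |P| >= |S|
   edges inside S = A ∪ P ∪ B (as |B| <= |A|), too many for a forest. *)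

Lemma card_setX_dep (T T' : finType) (P : pred T) (Q : T -> pred T') :
  #|[set p : T * T' | P p.1 && Q p.1 p.2]| = \sum_(x | P x) #|[set y | Q x y]|.
Proof.
rewrite -sum1_card (eq_bigl (fun p : T * T' => P p.1 && Q p.1 p.2)) => [|p]; last first.
  by rewrite inE.
rewrite -(pair_big_dep P Q (fun _ _ => 1)); apply: eq_bigr => x _.
by rewrite -sum1_card; apply: eq_bigl => y; rewrite inE.
Qed.

Section Domination.
Variables (T : finType) (e : rel T).

Definition dominates (c x : T) : bool := (c == x) || e c x.

Lemma dominatingP (D : {set T}) :
  reflect (forall v, exists2 c, c \in D & dominates c v) (dominating e D).
Proof.
apply: (iffP forallP) => [domD v|domD v].
  have /orP[vD|/exists_inP[c cD ecv]] := domD v.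
    by exists v; rewrite // /dominates eqxx.
  by exists c; rewrite // /dominates ecv orbT.
have [c cD /orP[/eqP<-|ecv]] := domD v; first by rewrite cD.
by apply/orP; right; apply/exists_inP; exists c.
Qed.

Lemma dominatingS (D D' : {set T}) :
  D \subset D' -> dominating e D -> dominating e D'.
Proof.
move=> /subsetP sDD' /dominatingP domD; apply/dominatingP => v.
by have [c /sDD' cD' dcv] := domD v; exists c.
Qed.

Lemma dominating_setT : dominating e [set: T].
Proof. by apply/dominatingP => v; exists v; rewrite ?inE // /dominates eqxx. Qed.

Definition private_nbhd (C : {set T}) (w : T) : {set T} :=
  [set x | dominates w x && [forall c in C, dominates c x ==> (c == w)]].

Lemma private_nbhd_dominates C w x : x \in private_nbhd C w -> dominates w x.
Proof. by rewrite inE => /andP[]. Qed.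

Lemma private_nbhd_unique C w x c :
  x \in private_nbhd C w -> c \in C -> dominates c x -> c = w.
Proof. by rewrite inE => /andP[_ /forall_inP priv] /priv/implyP/[apply]/eqP. Qed.

Lemma private_nbhd_notin C w x : x \in private_nbhd C w -> x != w -> x \notin C.
Proof.
move=> xP; apply: contraNN => xC.
by rewrite (private_nbhd_unique xP xC) // /dominates eqxx.
Qed.

Lemma private_nbhd_nonempty C w :
  dominating e C -> ~~ dominating e (C :\ w) -> exists x, x \in private_nbhd C w.
Proof.
move=> /dominatingP domC /dominatingP ndomCw.
have /existsP[v /forall_inP vNdom] : [exists v, [forall c in C :\ w, ~~ dominates c v]].
  apply: contra_notT ndomCw => /existsPn vdom v.
  by have /forall_inPn[c cCw /negbNE dcv] := vdom v; exists c.
exists v; rewrite inE; apply/andP; split.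
  have [c cC dcv] := domC v; have [cw|cw] := eqVneq c w; first by rewrite -cw.
  by move: (vNdom c); rewrite !inE cw cC dcv => /(_ isT).
apply/forall_inP => c cC; apply/implyP; apply: contraLR => cw.
by apply: vNdom; rewrite !inE cw cC.
Qed.

Lemma dominating_swap C u w :
  u != w -> dominating e C ->
  (forall x, x \in private_nbhd C w -> dominates u x) ->
  dominating e ((u |: C) :\ w).
Proof.
move=> uw /dominatingP domC domP; apply/dominatingP => v.
case: (boolP (v \in private_nbhd C w)) => [vP|vNP].
  by exists u; [rewrite !inE uw eqxx | exact: domP].
have [c cC dcv] := domC v; have [cw|cw] := eqVneq c w; last first.
  by exists c; rewrite // !inE cw cC orbT.
move: vNP; rewrite inE -cw dcv => /forall_inPn[c' c'C].
rewrite negb_imply => /andP[dc'v c'c]; exists c' => //.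
by rewrite !inE c'c c'C orbT.
Qed.

Lemma private_nbhd_dominator (C D : {set T}) w x :
  x \in private_nbhd C w -> w \notin D -> dominating e D ->
  exists2 d, d \in D :\: C & dominates d x.
Proof.
move=> xP wD /dominatingP domD; have [d dD ddx] := domD x.
exists d => //; rewrite inE dD andbT; apply: contraNN wD => dC.
by rewrite -(private_nbhd_unique xP dC ddx).
Qed.

End Domination.

Section Reconfiguration.
Variables (T : finType) (e : rel T).

Lemma dom_adjD1 (D : {set T}) v : v \in D -> dom_adj D (D :\ v).
Proof.
move=> vD; rewrite /dom_adj (_ : _ :|: _ = [set v]) ?cards1 //.
apply/setP => x; rewrite !inE.
by case: (eqVneq x v) => [->|_]; rewrite ?vD //=; case: (x \in D).
Qed.

Lemma dom_adjU1 (D : {set T}) v : v \notin D -> dom_adj D (v |: D).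
Proof.
move=> vND; rewrite /dom_adj (_ : _ :|: _ = [set v]) ?cards1 //.
apply/setP => x; rewrite !inE.
by case: (eqVneq x v) => [->|_]; rewrite ?(negPf vND) //=; case: (x \in D).
Qed.

Lemma reconf_refl k (D : {set T}) : dominating e D -> #|D| <= k -> reconf e k D D.
Proof. by move=> domD leDk; exists [::]; rewrite /= domD leDk. Qed.

Lemma reconf_cons k (D D' Dq : {set T}) :
  dom_adj D D' -> dominating e D -> #|D| <= k -> reconf e k D' Dq -> reconf e k D Dq.
Proof.
by move=> adj domD leDk [s [pth lst all_s]]; exists (D' :: s); rewrite /= adj domD leDk.
Qed.

End Reconfiguration.

Section Forest.
Variables (T : finType) (e : rel T).
Hypotheses (e_sym : symmetric e) (e_irr : irreflexive e) (e_acyclic : acyclic_graph e).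

Definition nbhd_in (S : {set T}) (x : T) : {set T} := [set y in S | e x y].

Definition arcs (S : {set T}) := [set p : T * T | [&& p.1 \in S, p.2 \in S & e p.1 p.2]].

Lemma nbr_notin_path x p y :
  uniq (x :: p) -> path e x p -> e x y -> y != head x p -> y \notin x :: p.
Proof.
move=> uxp pxp exy yNh; rewrite in_cons negb_or; apply/andP; split.
  by apply: contraTneq exy => ->; rewrite e_irr.
apply/negP => yp; move: uxp pxp yNh; case/splitPr: yp => p1 p2 uxp pxp yNh.
have p1_nil : p1 != [::] by case: p1 {uxp pxp} yNh => //=; rewrite eqxx.
apply: (negP (e_acyclic (c := x :: rcons p1 y) _ _)).
- by apply: subseq_uniq uxp; rewrite -cats1 -!cat_cons cat_subseq // sub1seq mem_head.
- by case: p1 {uxp pxp yNh} p1_nil => //= a l _; rewrite size_rcons.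
- move: pxp; rewrite /= cat_path !rcons_path => /andP[-> /= /andP[-> _]].
  by rewrite last_rcons e_sym exy.
Qed.

Lemma long_path_in (S : {set T}) x0 n :
  x0 \in S -> (forall x, x \in S -> 1 < #|nbhd_in S x|) ->
  exists x p, [/\ size p = n, uniq (x :: p), all (mem S) (x :: p) & path e x p].
Proof.
move=> Sx0 deg; elim: n => [|n [x [p [szp uxp Sxp pxp]]]].
  by exists x0, [::]; rewrite /= Sx0.
have [y [y' [yN y'N yy']]] := card_gt1P (deg x (allP Sxp x (mem_head _ _))).
have [z [zN zh]] : exists z, z \in nbhd_in S x /\ z != head x p.
  by case: (eqVneq y (head x p)) => [yh|]; [exists y'; rewrite -yh eq_sym | exists y].
move: zN; rewrite inE => /andP[Sz exz].
exists z, (x :: p); split=> /=; first by rewrite szp.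
- by rewrite nbr_notin_path.
- by rewrite Sz.
- by rewrite e_sym exz.
Qed.

Lemma forest_leaf (S : {set T}) : S != set0 -> exists2 v, v \in S & #|nbhd_in S v| <= 1.
Proof.
move=> /set0Pn[x0 Sx0]; apply/exists_inP; apply: contraT => /exists_inPn deg.
have [x [p [szp /card_uniqP cxp _ _]]] :
    exists x p, [/\ size p = #|T|, uniq (x :: p), all (mem S) (x :: p) & path e x p].
  by apply: long_path_in Sx0 _ => x /deg; rewrite ltnNge.
by have := max_card (mem (x :: p)); rewrite cxp /= szp ltnn.
Qed.

Lemma card_arcs (S : {set T}) : S != set0 -> #|arcs S| + 2 <= 2 * #|S|.
Proof.
have [n] := ubnP #|S|; elim: n S => // n IH S /ltnSE-leSn S0.
have [v Sv leaf_v] := forest_leaf S0.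
have nbhd_v y : (y \in nbhd_in S v) = (y \in S) && e v y by rewrite inE.
move: (nbhd_in S v) leaf_v nbhd_v => N leaf_v nbhd_v.
have cardS : #|S| = #|S :\ v|.+1 by rewrite (cardsD1 v S) Sv.
have [Sv0|Sv0] := eqVneq (S :\ v) set0.
  suff -> : arcs S = set0 by rewrite cards0 cardS Sv0 cards0.
  apply/setP => -[a b]; rewrite !inE /=; apply/and3P => -[Sa Sb eab].
  have onlyv c : c \in S -> c = v.
    move=> Sc; apply/eqP; apply: contraT => cv.
    have : c \in S :\ v by rewrite !inE cv Sc.
    by rewrite Sv0 inE.
  by rewrite (onlyv a Sa) (onlyv b Sb) e_irr in eab.
have arcsS : arcs S \subset
    arcs (S :\ v) :|: ([set (v, y) | y in N] :|: [set (y, v) | y in N]).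
  apply/subsetP => -[a b]; rewrite inE /= => /and3P[Sa Sb eab]; rewrite !in_setU.
  have [av|av] := eqVneq a v.
    by subst a; rewrite (imset_f (fun y => (v, y))) ?orbT // nbhd_v Sb eab.
  have [bv|bv] := eqVneq b v.
    by subst b; rewrite (imset_f (fun y => (y, v))) ?orbT // nbhd_v Sa e_sym eab.
  by rewrite !inE /= av bv Sa Sb eab.
have IHv : #|arcs (S :\ v)| + 2 <= 2 * #|S :\ v| by apply: IH; rewrite // -cardS.
have := subset_leq_card arcsS.
have := (leq_card_setU (arcs (S :\ v)) ([set (v, y) | y in N] :|: [set (y, v) | y in N])).1.
have := (leq_card_setU [set (v, y) | y in N] [set (y, v) | y in N]).1.
have := leq_imset_card (fun y => (v, y)) N; have := leq_imset_card (fun y => (y, v)) N.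
move: leaf_v IHv; rewrite cardS; lia.
Qed.

Lemma forest_rank_edges (rk : T -> nat) (S : {set T}) : S != set0 ->
  \sum_(x in S) #|[set y in S | e x y & rk x < rk y]| < #|S|.
Proof.
move=> S0.
set U := [set p : T * T | (p.1 \in S) && [&& p.2 \in S, e p.1 p.2 & rk p.1 < rk p.2]].
have -> : \sum_(x in S) #|[set y in S | e x y & rk x < rk y]| = #|U|.
  exact/esym/card_setX_dep.
pose swap (p : T * T) := (p.2, p.1).
have swapK : involutive swap by case.
have UV : [disjoint U & swap @: U].
  rewrite disjoints_subset; apply/subsetP => -[a b]; rewrite inE => /and4P[_ _ _ ltab].
  rewrite inE -[(a, b)]swapK (mem_imset _ _ (inv_inj swapK)) inE /=.
  by rewrite ltnNge (ltnW ltab) !andbF.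
have UVarcs : U :|: swap @: U \subset arcs S.
  apply/subsetP => p; rewrite in_setU => /orP[|/imsetP[q + ->]]; rewrite !inE.
    by case/and4P=> -> -> ->.
  by case/and4P=> /= -> -> eq _; rewrite e_sym.
have cardUV : #|U :|: swap @: U| = #|U| + #|U|.
  rewrite -{2}(card_imset U (inv_inj swapK)).
  by apply/eqP; rewrite (leq_card_setU U (swap @: U)).2.
have := subset_leq_card UVarcs; have := card_arcs S0; rewrite cardUV; lia.
Qed.

Lemma irreplaceable_two_nbrs (C D : {set T}) w :
  dominating e C -> ~~ dominating e (C :\ w) -> dominating e D -> w \in C :\: D ->
  (forall u, u \in D :\: C -> ~~ dominating e ((u |: C) :\ w)) ->
  1 < #|[set z | e w z & (z \in D :\: C) || (z \in private_nbhd e C w)]|.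
Proof.
move=> domC ndomCw domD; rewrite inE => /andP[wND wC] stuck.
set Z := [set z | _].
have miss u : u \in D :\: C ->
    exists2 x, x \in private_nbhd e C w & ~~ dominates e u x.
  move=> uB; apply/exists_inP; apply: contraNT (stuck u uB) => /exists_inPn domP.
  apply: dominating_swap domC _ => [|x /domP /negbNE //].
  by apply: contraNneq wND => <-; move: uB; rewrite inE => /andP[].
have inZ x : x \in private_nbhd e C w -> x != w -> x \in Z.
  move=> xP xw; have := private_nbhd_dominates xP.
  by rewrite in_set xP orbT andbT /dominates eq_sym (negPf xw).
have inZB d : d \in D :\: C -> dominates e d w -> d \in Z.
  move=> dB; have dw : d != w.
    by apply: contraTneq dB => ->; rewrite inE (negPf wND) andbF.
  by rewrite in_set dB andbT /dominates (negPf dw) e_sym.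
apply/card_gt1P; case: (boolP (w \in private_nbhd e C w)) => [wP|wNP].
  have [d dB ddw] := private_nbhd_dominator wP wND domD.
  have [x xP dNx] := miss d dB.
  have xw : x != w by apply: contraNneq dNx => ->.
  exists x, d; split; [exact: inZ | exact: inZB |].
  by apply: contraNneq dNx => <-; rewrite /dominates eqxx.
have [x xP] := private_nbhd_nonempty domC ndomCw.
have [d dB ddx] := private_nbhd_dominator xP wND domD.
have [y yP dNy] := miss d dB.
have xw : x != w by apply: contraNneq wNP => xw; rewrite -{1}xw.
have yw : y != w by apply: contraNneq wNP => yw; rewrite -{1}yw.
exists x, y; split; [exact: inZ | exact: inZ |].
by apply: contraNneq dNy => <-.
Qed.

Section NoExchange.
Variables C D : {set T}.
Hypotheses (domC : dominating e C) (domD : dominating e D).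
Hypothesis minC : forall v, v \in C -> ~~ dominating e (C :\ v).
Hypothesis stuck :
  forall u w, u \in D :\: C -> w \in C :\: D -> ~~ dominating e ((u |: C) :\ w).

Let A := C :\: D.
Let B := D :\: C.
Let P := [set x | [&& x \notin C, x \notin D & [exists w in A, x \in private_nbhd e C w]]].
Let S := A :|: P :|: B.
Let rk x := if x \in A then 0 else if x \in P then 1 else 2.
Let up x := [set y in S | e x y & rk x < rk y].

Let notin_A x : x \notin C -> x \notin A.
Proof. by apply: contraNN; rewrite inE => /andP[]. Qed.

Let notin_P x : x \in D -> x \notin P.
Proof. by rewrite inE => ->; rewrite andbF. Qed.

Lemma up_layer_A w : w \in A -> 1 < #|up w|.
Proof.
move=> wA; have wC : w \in C by move: wA; rewrite inE => /andP[].
have := irreplaceable_two_nbrs domC (minC wC) domD wA (fun u uB => stuck uB wA).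
move/leq_trans; apply.
apply/subset_leq_card/subsetP => z; rewrite [in X in X -> _]in_set.
move=> /andP[ewz zBP]; rewrite in_set ewz /rk wA.
have zNC : z \notin C.
  case/orP: zBP => [|zP]; first by rewrite inE => /andP[].
  by apply: private_nbhd_notin zP _; apply: contraTneq ewz => ->; rewrite e_irr.
have zPB : (z \in P) || (z \in B).
  case/orP: zBP => [->|zP]; first by rewrite orbT.
  have [zD|zND] := boolP (z \in D); first by rewrite /B in_setD zD zNC orbT.
  by rewrite /P inE zNC zND; apply/orP; left; apply/exists_inP; exists w.
by rewrite !in_setU (negPf (notin_A zNC)) zPB /=; case: ifP.
Qed.

Lemma up_layer_P x : x \in P -> 0 < #|up x|.
Proof.
move=> xP; move: (xP); rewrite inE => /and3P[xNC xND /exists_inP[w wA xPw]].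
have wND : w \notin D by move: wA; rewrite inE => /andP[].
have [d dB ddx] := private_nbhd_dominator xPw wND domD.
have [dNC dD] : d \notin C /\ d \in D by move: dB; rewrite inE => /andP[].
have dx : d != x by apply: contraNneq xND => <-.
apply/card_gt0P; exists d; rewrite in_set !in_setU dB orbT /= e_sym.
move: ddx; rewrite /dominates (negPf dx) /= => ->.
by rewrite /rk (negPf (notin_A xNC)) (negPf (notin_A dNC)) xP (negPf (notin_P dD)).
Qed.

Lemma sum_up_layers : #|A| * 2 + #|P| <= \sum_(x in S) #|up x|.
Proof.
have AS : A \subset S by rewrite /S -setUA subsetUl.
have PSA : P \subset S :\: A.
  apply/subsetP => x xP; rewrite in_setD !in_setU xP orbT andbT.
  by apply: notin_A; move: xP; rewrite inE => /and3P[].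
rewrite (big_setID A) (setIidPr AS) [X in _ <= _ + X](big_setID P) (setIidPr PSA).
rewrite -sum_nat_const -sum1_card; apply: leq_add; first exact: leq_sum up_layer_A.
by apply: leq_trans (leq_addr _ _); exact: leq_sum up_layer_P.
Qed.

Lemma no_exchange_eq : #|D| <= #|C| -> C = D.
Proof.
move=> leDC; apply/eqP; rewrite eqEcard leDC andbT -setD_eq0; apply: contraT => A0.
have cardS : #|S| <= #|A| + #|P| + #|B|.
  by rewrite (leq_trans (leq_card_setU _ _)) // leq_add2r leq_card_setU.
have cardB : #|B| <= #|A| by rewrite !cardsD setIC; lia.
have S0 : S != set0.
  by have /set0Pn[w wA] := A0; apply/set0Pn; exists w; rewrite /S -setUA in_setU wA.
have := leq_ltn_trans sum_up_layers (forest_rank_edges rk S0); lia.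
Qed.

End NoExchange.

Lemma minimal_dominating_exchange (C D : {set T}) :
  dominating e C -> (forall v, v \in C -> ~~ dominating e (C :\ v)) ->
  dominating e D -> #|D| <= #|C| -> C != D ->
  exists u w, [/\ u \in D :\: C, w \in C :\: D & dominating e ((u |: C) :\ w)].
Proof.
move=> domC minC domD leDC neCD.
have [/existsP[u /existsP[w /and3P[uB wA domCuw]]]|/existsPn stuck] :=
  boolP [exists u, exists w,
           [&& u \in D :\: C, w \in C :\: D & dominating e ((u |: C) :\ w)]].
  by exists u, w.
case/eqP: neCD; apply: (no_exchange_eq domC domD minC _ leDC) => u w uB wA.
by move/existsPn: (stuck u) => /(_ w); rewrite uB wA.
Qed.

Lemma reconf_to_minimum (Ds : {set T}) k (C : {set T}) :
  minimum_dominating e Ds -> dominating e C -> #|C| <= k -> reconf e k.+1 C Ds.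
Proof.
move=> [domDs minDs]; have [n] := ubnP (#|C| + #|C :\: Ds|).
elim: n C => // n IH C /ltnSE-measure_n domC leCk.
have [<- | neCDs] := eqVneq C Ds; first exact: reconf_refl domC (leqW leCk).
have [/exists_inP[v vC domCv] | /exists_inPn minC] :=
  boolP [exists v in C, dominating e (C :\ v)].
  have cardC : #|C| = #|C :\ v|.+1 by rewrite (cardsD1 v C) vC.
  have : #|(C :\ v) :\: Ds| <= #|C :\: Ds| by apply/subset_leq_card/setSD/subD1set.
  move=> leCvDs; apply: (reconf_cons (dom_adjD1 vC) domC (leqW leCk)).
  by apply: IH domCv _; move: measure_n leCk; rewrite cardC; lia.
have [u [w [uB wA domCuw]]] := minimal_dominating_exchange
  domC minC domDs (minDs C domC) neCDs.
move: uB wA; rewrite !in_setD => /andP[uNC uDs] /andP[wNDs wC].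
have wCu : w \in u |: C by rewrite in_setU1 wC orbT.
have cardCu : #|u |: C| = #|C|.+1 by rewrite cardsU1 uNC.
have cardCuw : #|(u |: C) :\ w| = #|C|.
  by apply/eqP; rewrite -eqSS -cardCu (cardsD1 w (u |: C)) wCu.
have : #|((u |: C) :\ w) :\: Ds| < #|C :\: Ds|.
  rewrite (cardsD1 w (C :\: Ds)) in_setD wNDs wC ltnS; apply/subset_leq_card/subsetP => x.
  rewrite !inE => /and3P[xNDs xw /orP[/eqP xu|xC]]; last by rewrite xw xNDs xC.
  by rewrite xu uDs in xNDs.
move=> ltCuwDs; apply: (reconf_cons (dom_adjU1 uNC) domC (leqW leCk)).
apply: (reconf_cons (dom_adjD1 wCu) (dominatingS (subsetUr _ _) domC)).
  by rewrite cardCu.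
by apply: IH domCuw _; move: measure_n leCk; rewrite cardCuw; lia.
Qed.

End Forest.

Theorem lemma7 (T : finType) (e : rel T) :
  is_tree e -> exists Ds : {set T}, canonical_dominating e Ds.
Proof.
move=> [[e_sym e_irr] [_ e_acyclic]].
have [Ds domDs minDs] := arg_minnP (fun D : {set T} => #|D|) (dominating_setT e).
have minimumDs : minimum_dominating e Ds by split.
exists Ds; split=> // D domD.
by apply: (reconf_to_minimum e_sym e_irr e_acyclic minimumDs domD).
Qed.
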